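(* Fix $n\in\mathbb{Z}_+$ and $a_1,\ldots,a_{n+1}\in(0,\infty)$. Then there is a constant $c>0$ (depending on $a_1,\ldots,a_{n+1}$) and an unbounded open set $B$ of positive real numbers with the following property: for each $\beta\in B$ there are $p_1,\ldots,p_n\in\mathbb{Z}$ such that, for each $j\in\{1,\ldots,n\}$, \[0<p_j\frac{a_j}{a_{n+1}}-\beta<\begin{cases}c\beta^{-2}&\text{if }n=1,\\ c\beta^{-1/(n-1)}&\text{if }n\geq2.\end{cases}\] *)

From HB Require Import structures.
From mathcomp Require Import all_boot all_order all_algebra.
From mathcomp Require Import boolp classical_sets reals topology normedtype exp.
Set Implicit Arguments. Unset Strict Implicit. Unset Printing Implicit Defensive.
Import Order.TTheory GRing.Theory Num.Theory.
Local Open Scope ring_scope.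

Definition lemma5p5_bound (R : realType) (n : nat) (c b : R) : R :=
  if n == 1%N then c * b ^- 2
  else c * (b `^ (- (1 / (n.-1)%:R))).

From HB Require Import structures.
From mathcomp Require Import all_boot all_order all_algebra.
From mathcomp Require Import boolp classical_sets reals topology normedtype exp.
From mathcomp Require Import mathcomp_extra zify ring lra.
Import Order.TTheory GRing.Theory Num.Theory numFieldNormedType.Exports.
Set Implicit Arguments. Unset Strict Implicit. Unset Printing Implicit Defensive.

Local Open Scope classical_set_scope.
Local Open Scope ring_scope.

(* Write r_j for a_j / a_(n+1) and f for the bound.  If some b0 > 0 admits
   integers p_j with 0 <= p_j r_j - b0 < f b0, then, f being decreasing, every b
   slightly below b0 satisfies the strict inequalities with the same p_j; so the
   interior of the set of good b works, provided such b0 exist beyond every bound.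
   For n = 1 take b0 = k r_1.  For n >= 2, either some q r_1 lies on every lattice
   r_j Z and its multiples are exact, or Dirichlet's simultaneous approximation of
   the r_1 / r_j (j >= 2) gives 0 < q <= N^(n-1) with |q r_1 - p_j r_j| < max r / N.
   Each q up to a fixed Q keeps q r_1 away from some lattice, so q is large for
   large N, and b0 = q r_1 - max r / N has error < 2 max r / N <= c b0^(-1/(n-1)). *)

Section Dirichlet.
Variable R : realType.
Implicit Types x r : R.

Definition frac x : R := x - (Num.floor x)%:~R.

Lemma frac_ge0 x : 0 <= frac x.
Proof. by rewrite subr_ge0 floor_le. Qed.

Lemma frac_lt1 x : frac x < 1.
Proof. by rewrite ltrBlDl -intrD1 floorD1_gt. Qed.

Lemma min_frac_le_dist_int x (t : int) :
  Num.min (frac x) (1 - frac x) <= `|x - t%:~R|.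
Proof.
have := floor_le x; have := floorD1_gt x; rewrite intrD1 /frac => x_lt x_ge.
case: (lerP t (Num.floor x)) => [t_le | lt_t].
  rewrite -(ler_int R) in t_le.
  by rewrite ger0_norm ?ge_min; [apply/orP; left | ]; lra.
rewrite -lezD1 -(ler_int R) intrD1 in lt_t.
by rewrite ler0_norm ?ge_min; [apply/orP; right | ]; lra.
Qed.

Lemma dist_lattice_gt0 x r : 0 < r -> (forall t : int, t%:~R * r != x) ->
  exists2 d : R, 0 < d & forall t : int, d <= `|x - t%:~R * r|.
Proof.
move=> r_gt0 x_notin; set y := x / r.
have frac_neq0 : frac y != 0.
  apply: contraNneq (x_notin (Num.floor y)) => /eqP; rewrite subr_eq0 => /eqP <-.
  by rewrite /y mulfVK // gt_eqF.
have frac_gt0 : 0 < frac y by rewrite lt_neqAle eq_sym frac_neq0 frac_ge0.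
exists (r * Num.min (frac y) (1 - frac y)).
  by rewrite mulr_gt0 // lt_min frac_gt0 subr_gt0 frac_lt1.
move=> t; have -> : x - t%:~R * r = r * (y - t%:~R) by rewrite /y; field; rewrite gt_eqF.
by rewrite normrM gtr0_norm // ler_pM2l // min_frac_le_dist_int.
Qed.

Definition box (N : nat) x : 'I_N.+1 := inord (Num.truncn (N.+1%:R * frac x)).

Lemma box_frac_close (N : nat) x y :
  box N x = box N y -> `|frac x - frac y| < N.+1%:R^-1.
Proof.
have N_gt0 : 0 < N.+1%:R :> R by rewrite ltr0n.
have box_val z : (box N z : nat) = Num.truncn (N.+1%:R * frac z).
  rewrite inordK // truncn_lt_nat ?mulr_ge0 ?frac_ge0 //.
  by rewrite -[ltRHS]mulr1 ltr_pM2l ?frac_lt1.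
have trunc_itv z : let u := N.+1%:R * frac z in
    (Num.truncn u)%:R <= u < (Num.truncn u).+1%:R.
  by apply: truncn_itv; rewrite mulr_ge0 ?frac_ge0 // ltW.
move=> /(congr1 val); rewrite /= !box_val => eq_trunc.
move: (trunc_itv x) (trunc_itv y) => /=; rewrite eq_trunc => /andP[? ?] /andP[? ?].
rewrite -(ltr_pM2l N_gt0) mulfV ?gt_eqF // -{1}(gtr0_norm N_gt0) -normrM mulrBr.
by rewrite ltr_norml; apply/andP; split; lra.
Qed.

Theorem dirichlet_simultaneous (m N : nat) (theta : 'I_m -> R) :
  exists2 q : nat, (0 < q <= N.+1 ^ m)%N &
    exists s : 'I_m -> int, forall j, `|q%:R * theta j - (s j)%:~R| < N.+1%:R^-1.
Proof.
pose boxes (k : 'I_(N.+1 ^ m).+1) : {ffun 'I_m -> 'I_N.+1} :=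
  [ffun j => box N (k%:R * theta j)].
have /injectivePn[k1 [k2 k12 same_boxes]] : ~~ injectiveb boxes.
  by apply/injectiveP => /leq_card; rewrite card_ffun !card_ord ltnn.
wlog lt_k12 : k1 k2 k12 same_boxes / (k1 < k2)%N.
  move=> hw; case: (ltngtP k1 k2) => [|lt_k21|/val_inj eq_k12]; first exact: hw.
  - by apply: (hw k2 k1) => //; rewrite eq_sym.
  - by rewrite eq_k12 eqxx in k12.
exists (k2 - k1)%N; first by have := ltn_ord k2; lia.
exists (fun j => Num.floor (k2%:R * theta j) - Num.floor (k1%:R * theta j)) => j.
have /box_frac_close : box N (k1%:R * theta j) = box N (k2%:R * theta j).
  by have := congr1 (fun b : {ffun _ -> _} => b j) same_boxes; rewrite !ffunE.
by rewrite distrC /frac natrB ?(ltnW lt_k12) // intrB mulrBl; congr (`|_| < _); ring.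
Qed.

End Dirichlet.

Section LatticePoints.
Variables (R : realType) (n : nat) (r : 'I_n -> R).
Hypothesis r_gt0 : forall j, 0 < r j.

Lemma open_unbounded_of_large_approximants (f : R -> R) :
  (forall b b' : R, 0 < b -> b <= b' -> f b' <= f b) ->
  (forall M : R, exists2 b0 : R, M < b0 &
     exists p : 'I_n -> int, forall j, 0 <= (p j)%:~R * r j - b0 < f b0) ->
  exists B : set R, open B /\ B `<=` [set x | 0 < x] /\
    (forall M : R, exists2 b, B b & M < b) /\
    forall b, B b -> exists p : 'I_n -> int, forall j, 0 < (p j)%:~R * r j - b < f b.
Proof.
move=> f_anti large.
pose A : set R := [set b | 0 < b /\
  exists p : 'I_n -> int, forall j, 0 < (p j)%:~R * r j - b < f b].
exists A°; split; first exact: open_interior.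
split; first by move=> b /interior_subset[].
split; last by move=> b /interior_subset[].
move=> M; have [b0 M_lt_b0 [p p_b0]] := large (Num.max M 0).
pose lo := \big[Num.max/Num.max M 0]_j ((p j)%:~R * r j - f b0).
have lo_lt_b0 : lo < b0.
  by apply: bigmax_lt => // j _; have /andP[? ?] := p_b0 j; lra.
have M_le_lo : Num.max M 0 <= lo by rewrite /lo bigmax_idl le_max lexx.
have itv_sub : [set` `]lo, b0[] `<=` A.
  move=> b /=; rewrite in_itv /= => /andP[lo_lt_b b_lt_b0].
  have b_gt0 : 0 < b by move: M_le_lo; rewrite ge_max => /andP[]; lra.
  split=> //; exists p => j.
  have pj_le : (p j)%:~R * r j - f b0 <= lo.
    exact: (le_bigmax _ (fun j => (p j)%:~R * r j - f b0)).
  have f_le := f_anti b b0 b_gt0 (ltW b_lt_b0).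
  by have /andP[? ?] := p_b0 j; apply/andP; split; lra.
have [lo_lt_mid mid_lt_b0] := midf_lt lo_lt_b0.
exists ((lo + b0) / 2).
  apply: filterS itv_sub _; apply: open_nbhs_nbhs; split; first exact: interval_open.
  by rewrite /= in_itv /= lo_lt_mid.
by move: M_le_lo; rewrite ge_max => /andP[]; lra.
Qed.

Lemma large_exact_approximants (f : R -> R) (b1 : R) (s : 'I_n -> int) :
  (forall b : R, 0 < b -> 0 < f b) -> 0 < b1 -> (forall j, (s j)%:~R * r j = b1) ->
  forall M : R, exists2 b0 : R, M < b0 &
    exists p : 'I_n -> int, forall j, 0 <= (p j)%:~R * r j - b0 < f b0.
Proof.
move=> f_gt0 b1_gt0 s_r M; pose k := (Num.truncn (Num.max M 0 / b1)).+1.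
have M_lt : Num.max M 0 < k%:R * b1 by rewrite -ltr_pdivrMr // truncnS_gt.
have kb1_gt0 : 0 < k%:R * b1 by move: M_lt; rewrite gt_max => /andP[].
exists (k%:R * b1); first by move: M_lt; rewrite gt_max => /andP[].
exists (fun j => k%:Z * s j) => j.
by rewrite intrM -mulrA s_r -pmulrn subrr lexx f_gt0.
Qed.

Lemma off_lattice_of_not_common (x : R) :
  ~ (exists s : 'I_n -> int, forall j, (s j)%:~R * r j = x) ->
  exists j, forall t : int, t%:~R * r j != x.
Proof.
apply: contra_notP => on_all.
apply: (@fin_all_exists _ _ (fun j (t : int) => t%:~R * r j = x)) => j.
apply: contra_notP on_all => off_j; exists j => t; apply/eqP => eq_t.
by apply: off_j; exists t.
Qed.

Lemma uniform_lattice_separation (x : nat -> R) :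
  (forall q, (0 < q)%N -> exists j, forall t : int, t%:~R * r j != x q) ->
  forall Q, exists2 d : R, 0 < d & forall q, (0 < q <= Q)%N ->
    exists j, forall t : int, d <= `|x q - t%:~R * r j|.
Proof.
move=> off_lattice; elim=> [|Q [d d_gt0 sep_le_Q]]; first by exists 1 => // -[].
have [j j_off] := off_lattice Q.+1 isT.
have [d' d'_gt0 sep_Q1] := dist_lattice_gt0 (r_gt0 j) j_off.
exists (Num.min d d'); first by rewrite lt_min d_gt0 d'_gt0.
move=> q /andP[q_gt0]; rewrite leq_eqVlt ltnS => /orP[/eqP-> | q_le].
  by exists j => t; rewrite ge_min sep_Q1 orbT.
have [j' sep_j'] := sep_le_Q q (introT andP (conj q_gt0 q_le)).
by exists j' => t; rewrite ge_min sep_j'.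
Qed.

End LatticePoints.

Lemma inv_le_powR_ratio (R : realType) (k : nat) (N x y : R) :
  0 < N -> 0 < x -> 0 < y -> x <= N ^+ k.+1 * y ->
  N^-1 <= y `^ (1 / k.+1%:R) * x `^ (- (1 / k.+1%:R)).
Proof.
move=> N_gt0 x_gt0 y_gt0 x_le; set e := 1 / k.+1%:R.
have e_ge0 : 0 <= e by rewrite divr_ge0.
have root_N : (N ^+ k.+1) `^ e = N.
  by rewrite -powR_mulrn ?ltW // -powRrM /e div1r mulfV ?pnatr_eq0 // powRr1 // ltW.
have x_root_le : x `^ e <= N * y `^ e.
  rewrite -root_N -powRM ?exprn_ge0 ?(ltW N_gt0) ?(ltW y_gt0) //.
  apply: ge0_ler_powR => //; rewrite nnegrE ?(ltW x_gt0) //.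
  by rewrite mulr_ge0 ?exprn_ge0 ?(ltW N_gt0) ?(ltW y_gt0).
by rewrite powRN ler_pdivlMr ?powR_gt0 // mulrC ler_pdivrMr // mulrC.
Qed.

Section DirichletCase.
Variables (R : realType) (m : nat) (r : 'I_m.+2 -> R).
Hypothesis r_gt0 : forall j, 0 < r j.

Lemma simultaneous_lattice_approx (N : nat) :
  exists2 q : nat, (0 < q <= N.+1 ^ m.+1)%N &
    exists p : 'I_m.+2 -> int,
      forall j, `|q%:R * r ord0 - (p j)%:~R * r j| < r j / N.+1%:R.
Proof.
have [q q_range [s s_close]] :=
  dirichlet_simultaneous N (fun k => r ord0 / r (lift ord0 k)).
exists q => //; exists (fun j => if unlift ord0 j is Some k then s k else q%:Z).
move=> j; case: unliftP => [k ->|->]; last first.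
  by rewrite -pmulrn subrr normr0 divr_gt0 ?ltr0n.
have -> : q%:R * r ord0 - (s k)%:~R * r (lift ord0 k) =
    r (lift ord0 k) * (q%:R * (r ord0 / r (lift ord0 k)) - (s k)%:~R).
  by field; rewrite gt_eqF.
by rewrite normrM gtr0_norm // ltr_pM2l.
Qed.

Let rmax := \big[Num.max/0]_j r j.

Lemma large_dirichlet_approximants :
  (forall q, (0 < q)%N -> exists j, forall t : int, t%:~R * r j != q%:R * r ord0) ->
  forall M : R, exists2 b0 : R, M < b0 &
    exists p : 'I_m.+2 -> int, forall j, 0 <= (p j)%:~R * r j - b0 <
      2 * rmax * r ord0 `^ (1 / m.+1%:R) * b0 `^ (- (1 / m.+1%:R)).
Proof.
move=> off_lattice M.
have r_le j : r j <= rmax := le_bigmax 0 r j.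
have rmax_gt0 : 0 < rmax := lt_le_trans (r_gt0 ord0) (r_le ord0).
pose M' := Num.max M 0; pose Q := Num.truncn ((M' + rmax) / r ord0).
have [d d_gt0 sep] := uniform_lattice_separation r_gt0 off_lattice Q.
pose N := Num.truncn (rmax / d).
have [q /andP[q_gt0 q_le] [p close]] := simultaneous_lattice_approx N.
have N1_gt0 : 0 < N.+1%:R :> R by rewrite ltr0n.
set eps := rmax / N.+1%:R.
have eps_gt0 : 0 < eps by rewrite divr_gt0.
have eps_lt_d : eps < d.
  by rewrite ltr_pdivrMr // mulrC -ltr_pdivrMr // truncnS_gt.
have eps_le_rmax : eps <= rmax.
  by rewrite ler_pdivrMr // ler_peMr ?ler1n // ltW.
have close_eps j : `|q%:R * r ord0 - (p j)%:~R * r j| < eps.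
  by apply: lt_le_trans (close j) _; rewrite ler_pM2r ?invr_gt0.
have Q_lt_q : (Q < q)%N.
  rewrite ltnNge; apply/negP => q_le_Q.
  have [j sep_j] := sep q (introT andP (conj q_gt0 q_le_Q)).
  by have := lt_trans (le_lt_trans (sep_j (p j)) (close_eps j)) eps_lt_d; rewrite ltxx.
have M'_lt_qr : M' + rmax < q%:R * r ord0.
  by rewrite -ltr_pdivrMr // (lt_le_trans (truncnS_gt _)) // ler_nat.
have M_le_M' : M <= M' by rewrite le_max lexx.
have M'_ge0 : 0 <= M' by rewrite le_max lexx orbT.
set b0 := q%:R * r ord0 - eps.
have b0_gt0 : 0 < b0 by rewrite /b0; lra.
have b0_le : b0 <= N.+1%:R ^+ m.+1 * r ord0.
  apply: le_trans (_ : _ <= q%:R * r ord0) _; first by rewrite /b0; lra.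
  by rewrite ler_pM2r // -natrX ler_nat.
exists b0; first by rewrite /b0; lra.
exists p => j; have := close_eps j; rewrite ltr_norml => /andP[? ?].
have two_eps : 2 * eps <= 2 * rmax * r ord0 `^ (1 / m.+1%:R) * b0 `^ (- (1 / m.+1%:R)).
  rewrite /eps -!mulrA !ler_pM2l //.
  exact: inv_le_powR_ratio.
by apply/andP; split; rewrite /b0; lra.
Qed.

End DirichletCase.

Lemma lemma5p5_bound_gt0 (R : realType) (n : nat) (c b : R) :
  0 < c -> 0 < b -> 0 < lemma5p5_bound n c b.
Proof.
move=> c_gt0 b_gt0; rewrite /lemma5p5_bound; case: ifP => _.
  by rewrite mulr_gt0 ?invr_gt0 ?exprn_gt0.
by rewrite mulr_gt0 ?powR_gt0.
Qed.

Lemma lemma5p5_bound_antitone (R : realType) (n : nat) (c b b' : R) :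
  0 < c -> 0 < b -> b <= b' -> lemma5p5_bound n c b' <= lemma5p5_bound n c b.
Proof.
move=> c_gt0 b_gt0 le_bb'; have b'_gt0 := lt_le_trans b_gt0 le_bb'.
rewrite /lemma5p5_bound; case: ifP => _; rewrite ler_pM2l //.
  by rewrite lef_pV2 ?posrE ?exprn_gt0 // ler_pXn2r // nnegrE ltW.
rewrite !powRN lef_pV2 ?posrE ?powR_gt0 //.
by apply: ge0_ler_powR; rewrite ?nnegrE ?divr_ge0 // ltW.
Qed.

Lemma lemma5p5_large_approximants (R : realType) (n : nat) (r : 'I_n -> R) :
  (0 < n)%N -> (forall j, 0 < r j) ->
  exists2 c : R, 0 < c & forall M : R, exists2 b0 : R, M < b0 &
    exists p : 'I_n -> int, forall j, 0 <= (p j)%:~R * r j - b0 < lemma5p5_bound n c b0.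
Proof.
case: n r => [//|[|m]] r _ r_gt0.
  exists 1 => //; apply: (large_exact_approximants (b1 := r ord0) (s := fun=> 1)).
  - by move=> b; exact: lemma5p5_bound_gt0.
  - exact: r_gt0.
  - by move=> j; rewrite (ord1 j) mul1r.
pose c := 2 * \big[Num.max/0]_j r j * r ord0 `^ (1 / m.+1%:R).
have c_gt0 : 0 < c.
  by rewrite !mulr_gt0 ?powR_gt0 // (lt_le_trans (r_gt0 ord0)) // le_bigmax.
exists c => //.
have [[q q_gt0 [s s_r]] | inexact] := pselect (exists2 q : nat, (0 < q)%N &
  exists s : 'I_m.+2 -> int, forall j, (s j)%:~R * r j = q%:R * r ord0).
  apply: (large_exact_approximants _ _ s_r) => [b|]; first exact: lemma5p5_bound_gt0.
  by rewrite mulr_gt0 ?ltr0n.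
move=> M; apply: (large_dirichlet_approximants r_gt0 _ M) => q q_gt0.
by apply: off_lattice_of_not_common => common; apply: inexact; exists q.
Qed.

Theorem lemma5p5 (R : realType) (n : nat) (hn : (0 < n)%N)
  (a : 'I_n.+1 -> R) (ha : forall i, 0 < a i) :
  exists c : R, 0 < c /\
  exists B : set R,
    open B /\ B `<=` [set x | 0 < x] /\
    (forall M : R, exists2 b, B b & M < b) /\
    forall b, B b ->
      exists p : 'I_n -> int, forall j : 'I_n,
        0 < (p j)%:~R * (a (widen_ord (leqnSn n) j) / a ord_max) - b
          < lemma5p5_bound n c b.
Proof.
pose r j := a (widen_ord (leqnSn n) j) / a ord_max.
have r_gt0 j : 0 < r j by rewrite divr_gt0.
have [c c_gt0 large] := lemma5p5_large_approximants hn r_gt0.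
exists c; split=> //.
apply: (open_unbounded_of_large_approximants _ large) => b b' b_gt0.
exact: lemma5p5_bound_antitone.
Qed.
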